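(* Let $\mathcal{G}=(V,E)$ be a connected undirected graph with node set $V=\{1,\dots,n\}$, and for each node $i$ let $N^i$ denote its set of neighbors. Consider the time-varying function $F(\mathbf{y};t)=f(\mathbf{y};t)+g(\mathbf{y};t)$ of $\mathbf{y}=(\mathbf{y}^1;\dots;\mathbf{y}^n)\in\mathbb{R}^{np}$, $\mathbf{y}^i\in\mathbb{R}^p$, where $f(\mathbf{y};t)=\sum_{i\in V}f^i(\mathbf{y}^i;t)$ and $g(\mathbf{y};t)=\sum_{i\in V}g^{i,i}(\mathbf{y}^i;t)+\sum_{(i,j)\in E}g^{i,j}(\mathbf{y}^i,\mathbf{y}^j;t)$, all functions being twice continuously differentiable in $\mathbf{y}$ and such that $\nabla_{t\mathbf{y}}F$ exists. Fix a point $(\mathbf{y}_k,t_k)$ and define $$\mathbf{D}_k:=\nabla_{\mathbf{y}\mathbf{y}}f(\mathbf{y}_k;t_k)+\mathrm{diag}[\nabla_{\mathbf{y}\mathbf{y}}g(\mathbf{y}_k;t_k)],\qquad \mathbf{B}_k:=\mathrm{diag}[\nabla_{\mathbf{y}\mathbf{y}}g(\mathbf{y}_k;t_k)]-\nabla_{\mathbf{y}\mathbf{y}}g(\mathbf{y}_k;t_k),$$ where $\mathrm{diag}[\cdot]$ keeps the $p\times p$ diagonal blocks and sets all other blocks to zero, and assume $\mathbf{D}_k$ is positive definite. For an integer $K\ge 0$ let $$\mathbf{H}_{k,(K)}^{-1}:=\mathbf{D}_k^{-1/2}\sum_{\tau=0}^{K}\big(\mathbf{D}_k^{-1/2}\mathbf{B}_k\mathbf{D}_k^{-1/2}\big)^{\tau}\mathbf{D}_k^{-1/2},\qquad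 \mathbf{p}_{k,(K)}:=-\mathbf{H}_{k,(K)}^{-1}\nabla_{t\mathbf{y}}F(\mathbf{y}_k;t_k).$$ Denote by $\mathbf{D}_k^{ij},\mathbf{B}_k^{ij}$ the $(i,j)$-th $p\times p$ blocks of $\mathbf{D}_k,\mathbf{B}_k$ and by $\nabla_{t\mathbf{y}}F^i(\mathbf{y}_k;t_k)$ the $i$-th $p$-dimensional subvector of $\nabla_{t\mathbf{y}}F(\mathbf{y}_k;t_k)$. Define, for each node $i$, $\mathbf{p}^i_{k,(0)}:=-(\mathbf{D}_k^{ii})^{-1}\nabla_{t\mathbf{y}}F^i(\mathbf{y}_k;t_k)$ and, for $\tau=0,\dots,K-1$, $$\mathbf{p}^i_{k,(\tau+1)}:=(\mathbf{D}_k^{ii})^{-1}\Big(\sum_{j\in N^i}\mathbf{B}_k^{ij}\mathbf{p}^j_{k,(\tau)}-\nabla_{t\mathbf{y}}F^i(\mathbf{y}_k;t_k)\Big).$$ Then for every $i$, $\mathbf{p}^i_{k,(K)}$ equals the $i$-th subvector of $\mathbf{p}_{k,(K)}$.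
   Context: $\nabla_{\mathbf{y}\mathbf{y}}$ denotes the Hessian with respect to $\mathbf{y}$ and $\nabla_{t\mathbf{y}}F$ the partial derivative with respect to $t$ of the gradient $\nabla_{\mathbf{y}}F$. The matrix $\mathbf{D}_k$ is block diagonal, and the block $\mathbf{B}_k^{ij}$ for $i\ne j$ equals $-\nabla_{\mathbf{y}^i\mathbf{y}^j}g^{i,j}(\mathbf{y}_k^i,\mathbf{y}_k^j;t_k)$ if $(i,j)$ is an edge and zero otherwise; diagonal blocks of $\mathbf{B}_k$ are zero. *)

From HB Require Import structures.
From mathcomp Require Import all_boot all_order all_algebra.
From mathcomp Require Import all_classical all_reals all_analysis.
Unset Printing Implicit Defensive.
Import Order.TTheory GRing.Theory Num.Theory.
Import numFieldNormedType.Exports.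
Local Open Scope ring_scope.

Section Defs.
Variable R : realType.

Definition ebasis (m : nat) (a : 'I_m) : 'rV[R]_m := delta_mx 0 a.
Arguments ebasis {m} a.


Definition partial (m : nat) (h : 'rV[R]_m -> R) (y : 'rV[R]_m) (a : 'I_m) : R :=
  derive h y (ebasis a).
Arguments partial {m} h y a.


Definition C2 (m : nat) (h : 'rV[R]_m -> R) : Prop :=
  [/\ continuous h,
      (forall y a, derivable h y (ebasis a)),
      (forall a, continuous (fun z => partial h z a)),
      (forall y a b, derivable (fun z => partial h z a) y (ebasis b)) &
      (forall a b, continuous (fun z => partial (fun w => partial h w a) z b))].
Arguments C2 {m} h.


Definition hess (m : nat) (h : 'rV[R]_m -> R) (y : 'rV[R]_m) : 'M[R]_m :=
  \matrix_(a, b) partial (fun z => partial h z b) y a.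
Arguments hess {m} h y.


Definition grad_ty (m : nat) (H : 'rV[R]_m -> R -> R) (y : 'rV[R]_m) (t : R)
  : 'cV[R]_m :=
  \col_a derive (fun s : R => partial (H ^~ s) y a) t 1.
Arguments grad_ty {m} H y t.


(* Stacked vectors y = (y^1; ...; y^n) in R^{np}: coordinate (i,a) of the
   stacked vector is index mxvec_index i a (row-major stacking). *)
Definition node (n p : nat) (k : 'I_(n * p)) : 'I_n :=
  (enum_val (cast_ord (esym (@mxvec_cast n p)) k)).1.

Definition subv (n p : nat) (y : 'rV[R]_(n * p)) (i : 'I_n) : 'rV[R]_p :=
  \row_a y 0 (mxvec_index i a).

Definition subcol (n p : nat) (v : 'cV[R]_(n * p)) (i : 'I_n) : 'cV[R]_p :=
  \col_a v (mxvec_index i a) 0.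

Definition blk (n p : nat) (M : 'M[R]_(n * p)) (i j : 'I_n) : 'M[R]_p :=
  \matrix_(a, b) M (mxvec_index i a) (mxvec_index j b).

Definition blkdiag (n p : nat) (M : 'M[R]_(n * p)) : 'M[R]_(n * p) :=
  \matrix_(k, l) (if @node n p k == @node n p l then M k l else 0).

Definition ffun_ (n p : nat) (fi : 'I_n -> 'rV[R]_p -> R -> R)
  (y : 'rV[R]_(n * p)) (t : R) : R :=
  \sum_(i < n) fi i (subv n p y i) t.

(* edges are ordered pairs (i,j) with e i j *)
Definition gfun_ (n p : nat) (e : rel 'I_n) (gii : 'I_n -> 'rV[R]_p -> R -> R)
  (gij : 'I_n -> 'I_n -> 'rV[R]_p -> 'rV[R]_p -> R -> R)
  (y : 'rV[R]_(n * p)) (t : R) : R :=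
  \sum_(i < n) gii i (subv n p y i) t +
  \sum_(i < n) \sum_(j < n | e i j) gij i j (subv n p y i) (subv n p y j) t.

Definition symmx (m : nat) (M : 'M[R]_m) : Prop := M^T = M.
Arguments symmx {m} M.


Definition posdef (m : nat) (M : 'M[R]_m) : Prop :=
  symmx M /\ forall x : 'cV[R]_m, x != 0 -> 0 < (x^T *m M *m x) 0 0.
Arguments posdef {m} M.


(* S is the inverse square root D^{-1/2}: the symmetric positive definite
   square root of D^{-1} *)
Definition inv_sqrt (m : nat) (D S : 'M[R]_m) : Prop :=
  posdef S /\ S *m S = invmx D.
Arguments inv_sqrt {m} D S.


Fixpoint prec (n p : nat) (e : rel 'I_n) (D B : 'M[R]_(n * p))
  (gv : 'cV[R]_(n * p)) (tau : nat) (i : 'I_n) : 'cV[R]_p :=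
  match tau with
  | 0 => - (invmx (blk n p D i i) *m subcol n p gv i)
  | tau'.+1 => invmx (blk n p D i i) *m
      ((\sum_(j < n | e i j) blk n p B i j *m prec n p e D B gv tau' j) - subcol n p gv i)
  end.

End Defs.
Arguments node n p k.
Arguments subv {R} n p y i.
Arguments subcol {R} n p v i.
Arguments blk {R} n p M i j.
Arguments blkdiag {R} n p M.
Arguments ffun_ {R} n p fi y t.
Arguments gfun_ {R} n p e gii gij y t.
Arguments prec {R} n p e D B gv tau i.
Arguments ebasis {R m} a.
Arguments partial {R m} h y a.
Arguments C2 {R m} h.
Arguments hess {R m} h y.
Arguments grad_ty {R m} H y t.
Arguments symmx {R m} M.
Arguments posdef {R m} M.
Arguments inv_sqrt {R m} D S.

From HB Require Import structures.
From mathcomp Require Import all_boot all_order all_algebra.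
From mathcomp Require Import all_classical all_reals all_analysis.
Import Order.TTheory GRing.Theory Num.Theory.
Import numFieldNormedType.Exports.
Local Open Scope ring_scope.

(* D_k^{-1/2} (sum_tau (D_k^{-1/2} B_k D_k^{-1/2})^tau) D_k^{-1/2}
   = sum_tau (D_k^{-1} B_k)^tau D_k^{-1}, so the centralized directions satisfy
   p_(K+1) = D_k^{-1} (B_k p_(K) - grad).  The distributed recursion is the i-th
   block row of this identity: the (i,j) block of the Hessian of f vanishes for
   i <> j, and that of g unless i and j are adjacent, because the increment of
   f (or g) along a coordinate of node j only involves terms that do not depend
   on node i.  Hence D_k is block diagonal, so D_k^{-1} acts blockwise by
   (D_k^{ii})^{-1}, and B_k^{ij} = 0 off the edges. *)

Section DirectionalDerivative.
Variables (R : realType) (V W : normedModType R).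

Lemma derive_eq_increments (h1 h2 : V -> W) z1 z2 v :
  (forall s : R, h1 (s *: v + z1) - h1 z1 = h2 (s *: v + z2) - h2 z2) ->
  derive h1 z1 v = derive h2 z2 v.
Proof.
move=> incr; rewrite /derive.
suff -> : (fun s : R => s^-1 *: ((h1 \o shift z1) (s *: v) - h1 z1)) =
          (fun s => s^-1 *: ((h2 \o shift z2) (s *: v) - h2 z2)) by [].
by apply: funext => s /=; rewrite incr.
Qed.

Lemma derive_invariant0 (h : V -> W) z v :
  (forall s : R, h (s *: v + z) = h z) -> derive h z v = 0.
Proof.
move=> hv; rewrite (@derive_eq_increments h (fun _ => 0) z z) ?derive_cst //.
by move=> s; rewrite hv !subrr.
Qed.

Lemma derive_shift_invariant (h : V -> W) u v :
  (forall s w, h (s *: u + w) = h w) ->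
  forall s z, derive h (s *: u + z) v = derive h z v.
Proof. by move=> hu s z; apply: derive_eq_increments => r; rewrite addrCA !hu. Qed.

End DirectionalDerivative.

Lemma hess_eq0_local (R : realType) m (h hl : 'rV[R]_m -> R) y a b :
  (forall s z, h (s *: ebasis b + z) - h z = hl (s *: ebasis b + z) - hl z) ->
  (forall s w, hl (s *: ebasis a + w) = hl w) ->
  hess h y a b = 0.
Proof.
move=> incr inv_a; rewrite mxE /partial.
have -> : (fun z => derive h z (ebasis b)) = (fun z => derive hl z (ebasis b)).
  by apply: funext => z; apply: derive_eq_increments.
by apply: derive_invariant0 => s; apply: derive_shift_invariant.
Qed.

Lemma posdef_unit (R : realType) m (D : 'M[R]_m) : posdef D -> D \in unitmx.
Proof.
case=> _ posD; rewrite unitmxE unitfE; apply/negP => /det0P [v v_neq0 vD].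
have : v^T != 0 by rewrite -(inj_eq (@trmx_inj _ _ _)) trmxK trmx0.
by move/posD; rewrite trmxK vD mul0mx mxE ltxx.
Qed.

Lemma mulr_expr_rot (R : pzRingType) (a b : R) t : a * (b * a) ^+ t = (a * b) ^+ t * a.
Proof.
elim: t => [|t IHt]; first by rewrite !expr0 mul1r mulr1.
by rewrite exprSr mulrA IHt exprSr -!mulrA.
Qed.

Section Blocks.
Variables (R : realType) (n p : nat).
Local Notation idx := (@mxvec_index n p).
Local Notation blk := (blk n p).
Local Notation subcol := (subcol n p).

Lemma sum_idx (F : 'I_(n * p) -> R) :
  \sum_l F l = \sum_(k < n) \sum_(c < p) F (idx k c).
Proof.
rewrite (reindex _ (curry_mxvec_bij _ _)) /= pair_big /=.
by apply: eq_bigr => -[k c].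
Qed.

Lemma idx_eq (i j : 'I_n) (a b : 'I_p) :
  (idx i a == idx j b) = (i == j) && (a == b).
Proof.
rewrite /mxvec_index (inj_eq (@cast_ord_inj _ _ _)) (inj_eq (@enum_rank_inj _)).
by rewrite xpair_eqE.
Qed.

Lemma node_idx (i : 'I_n) (a : 'I_p) : node n p (idx i a) = i.
Proof. by rewrite /node /mxvec_index cast_ordK enum_rankK. Qed.

Lemma blk_mul (A B : 'M[R]_(n * p)) i j :
  blk (A *m B) i j = \sum_k blk A i k *m blk B k j.
Proof.
apply/matrixP => a b; rewrite !mxE summxE sum_idx; apply: eq_bigr => k _.
by rewrite !mxE; apply: eq_bigr => c _; rewrite !mxE.
Qed.

Lemma subcol_mul (A : 'M[R]_(n * p)) v i :
  subcol (A *m v) i = \sum_k blk A i k *m subcol v k.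
Proof.
apply/matrixP => a b; rewrite !mxE summxE sum_idx; apply: eq_bigr => k _.
by rewrite !mxE; apply: eq_bigr => c _; rewrite !mxE.
Qed.

Lemma blk1 i : blk (1%:M : 'M[R]_(n * p)) i i = 1%:M.
Proof. by apply/matrixP => a b; rewrite !mxE idx_eq eqxx. Qed.

Lemma blkD (A B : 'M[R]_(n * p)) i j : blk (A + B) i j = blk A i j + blk B i j.
Proof. by apply/matrixP => a b; rewrite !mxE. Qed.

Lemma blkB (A B : 'M[R]_(n * p)) i j : blk (A - B) i j = blk A i j - blk B i j.
Proof. by apply/matrixP => a b; rewrite !mxE. Qed.

Lemma blk_blkdiag (M : 'M[R]_(n * p)) i j :
  blk (blkdiag n p M) i j = if i == j then blk M i j else 0.
Proof.
by apply/matrixP => a b; rewrite !mxE !node_idx; case: eqP => _; rewrite ?mxE.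
Qed.

Lemma subcolN (v : 'cV[R]_(n * p)) i : subcol (- v) i = - subcol v i.
Proof. by apply/matrixP => a b; rewrite !mxE. Qed.

Lemma subcolB (v w : 'cV[R]_(n * p)) i : subcol (v - w) i = subcol v i - subcol w i.
Proof. by apply/matrixP => a b; rewrite !mxE. Qed.

Lemma subv_shift_other (k : 'I_(n * p)) i s (z : 'rV[R]_(n * p)) :
  node n p k != i -> subv n p (s *: ebasis k + z) i = subv n p z i.
Proof.
move=> k_i; apply/rowP => a; rewrite !mxE /=.
case: eqP => [k_ia|_]; last by rewrite mulr0 add0r.
by move: k_i; rewrite -k_ia node_idx eqxx.
Qed.

End Blocks.

Section BlockJacobi.
Variables (R : realType) (n p : nat) (e : rel 'I_n).
Variables (D B S : 'M[R]_(n * p)) (g : 'cV[R]_(n * p)).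
Hypotheses (D_unit : D \in unitmx) (S_sqrt : S *m S = invmx D).
Hypotheses (D_blkdiag : forall i j, i != j -> blk n p D i j = 0)
           (B_sparse : forall i j, ~~ e i j -> blk n p B i j = 0).

Lemma subcol_blkdiag_mul v i : subcol n p (D *m v) i = blk n p D i i *m subcol n p v i.
Proof.
rewrite subcol_mul (bigD1 i) //= big1 ?addr0 // => k k_i.
by rewrite D_blkdiag ?mul0mx // eq_sym.
Qed.

Lemma blk_diag_unit i : blk n p D i i \in unitmx.
Proof.
have : blk n p (invmx D *m D) i i = 1%:M by rewrite mulVmx // blk1.
rewrite blk_mul (bigD1 i) //= big1 ?addr0 => [|k k_i]; first by case/mulmx1_unit.
by rewrite D_blkdiag ?mulmx0.
Qed.

Lemma subcol_invmx_mul v i :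
  subcol n p (invmx D *m v) i = invmx (blk n p D i i) *m subcol n p v i.
Proof.
have -> : subcol n p v i = subcol n p (D *m (invmx D *m v)) i by rewrite mulKVmx.
by rewrite subcol_blkdiag_mul mulKmx // blk_diag_unit.
Qed.

Lemma subcol_sparse_mul v i :
  subcol n p (B *m v) i = \sum_(k < n | e i k) blk n p B i k *m subcol n p v k.
Proof.
rewrite subcol_mul [RHS]big_mkcond /=; apply: eq_bigr => k _.
by case: ifP => // /negbT /B_sparse ->; rewrite mul0mx.
Qed.

Definition neumann_dir K :=
  - ((\sum_(tau < K.+1) (invmx D *m B) ^+ tau) *m invmx D *m g).

Lemma neumann_dirS K : neumann_dir K.+1 = invmx D *m (B *m neumann_dir K - g).
Proof.
rewrite /neumann_dir big_ord_recl expr0 /=.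
under eq_bigr do rewrite exprS.
rewrite -mulr_sumr !mulmxE mulrDl mul1r mulmxDl opprD mulmxBr mulmxN addrC.
by rewrite -!mulmxE !mulmxA mulmxN !mulmxA.
Qed.

Lemma prec_neumann_dir K i : prec n p e D B g K i = subcol n p (neumann_dir K) i.
Proof.
elim: K i => [|K IH] i /=.
  by rewrite /neumann_dir big_ord1 expr0 mul1mx subcolN subcol_invmx_mul.
rewrite neumann_dirS subcol_invmx_mul subcolB subcol_sparse_mul.
by congr (_ *m (_ - _)); apply: eq_bigr => k _; rewrite IH.
Qed.

Lemma neumann_dir_sqrt K :
  - (S *m (\sum_(tau < K.+1) (S *m B *m S) ^+ tau) *m S *m g) = neumann_dir K.
Proof.
rewrite /neumann_dir; congr (- (_ *m g)).
rewrite -S_sqrt !mulmxE mulr_sumr !mulr_suml; apply: eq_bigr => t _.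
by rewrite mulr_expr_rot -!mulrA.
Qed.

End BlockJacobi.

Section HessianSparsity.
Variables (R : realType) (n p : nat) (t : R) (y : 'rV[R]_(n * p)).
Local Notation idx := (@mxvec_index n p).

Lemma blk_hess_ffun_offdiag (fi : 'I_n -> 'rV[R]_p -> R -> R) i j : i != j ->
  blk n p (hess (ffun_ n p fi ^~ t) y) i j = 0.
Proof.
move=> i_j; apply/matrixP => a b; rewrite mxE [RHS]mxE.
apply: (@hess_eq0_local _ _ _ (fun w => fi j (subv n p w j) t)) => [s z|s w].
  rewrite /ffun_ -sumrB (bigD1 j) //= big1 ?addr0 // => k k_j.
  by rewrite subv_shift_other ?subrr // node_idx eq_sym.
by rewrite subv_shift_other // node_idx.
Qed.

Variables (e : rel 'I_n) (gii : 'I_n -> 'rV[R]_p -> R -> R)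
  (gij : 'I_n -> 'I_n -> 'rV[R]_p -> 'rV[R]_p -> R -> R).

Definition gfun_at j (w : 'rV[R]_(n * p)) : R := gii j (subv n p w j) t +
  \sum_i' \sum_(j' < n | e i' j')
     (if (i' == j) || (j' == j) then gij i' j' (subv n p w i') (subv n p w j') t else 0).

Lemma gfun_at_increment j b s z :
  gfun_ n p e gii gij (s *: ebasis (idx j b) + z) t - gfun_ n p e gii gij z t =
  gfun_at j (s *: ebasis (idx j b) + z) - gfun_at j z.
Proof.
rewrite /gfun_ /gfun_at !opprD addrACA [RHS]addrACA; congr (_ + _).
  rewrite -sumrB (bigD1 j) //= big1 ?addr0 // => k k_j.
  by rewrite subv_shift_other ?subrr // node_idx eq_sym.
rewrite -!sumrB; apply: eq_bigr => i' _; rewrite -!sumrB; apply: eq_bigr => j' _.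
case: ifP => // /negbT; rewrite negb_or => /andP [i'_j j'_j].
by rewrite !subv_shift_other ?subrr // node_idx eq_sym.
Qed.

Lemma gfun_at_shift_nonadj i j a s w : i != j -> ~~ e i j -> ~~ e j i ->
  gfun_at j (s *: ebasis (idx i a) + w) = gfun_at j w.
Proof.
move=> i_j nij nji; rewrite /gfun_at subv_shift_other ?node_idx //; congr (_ + _).
apply: eq_bigr => i' _; apply: eq_bigr => j' e_ij'.
case: ifP => // /orP [/eqP i'j | /eqP j'j].
  have i_i' : node n p (idx i a) != i' by rewrite node_idx i'j.
  have i_j' : node n p (idx i a) != j'.
    by rewrite node_idx; apply: contraNneq nji => i_j'; rewrite i_j' -i'j.
  by rewrite !subv_shift_other.
have i_j' : node n p (idx i a) != j' by rewrite node_idx j'j.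
have i_i' : node n p (idx i a) != i'.
  by rewrite node_idx; apply: contraNneq nij => i_i'; rewrite i_i' -j'j.
by rewrite !subv_shift_other.
Qed.

Lemma blk_hess_gfun_nonadj i j : i != j -> ~~ e i j -> ~~ e j i ->
  blk n p (hess (gfun_ n p e gii gij ^~ t) y) i j = 0.
Proof.
move=> i_j nij nji; apply/matrixP => a b; rewrite mxE [RHS]mxE.
apply: (@hess_eq0_local _ _ _ (gfun_at j)) => s z.
  exact: gfun_at_increment.
exact: gfun_at_shift_nonadj.
Qed.

End HessianSparsity.

Theorem proposition1 (R : realType) (n p : nat) (e : rel 'I_n)
  (e_sym : symmetric e) (e_irr : irreflexive e)
  (e_conn : forall i j : 'I_n, connect e i j)
  (fi : 'I_n -> 'rV[R]_p -> R -> R)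
  (gii : 'I_n -> 'rV[R]_p -> R -> R)
  (gij : 'I_n -> 'I_n -> 'rV[R]_p -> 'rV[R]_p -> R -> R)
  (hf : forall i t, C2 (fun u => fi i u t))
  (hgii : forall i t, C2 (fun u => gii i u t))
  (hgij : forall i j, e i j -> forall t,
     C2 (fun w : 'rV[R]_(p + p) => gij i j (lsubmx w) (rsubmx w) t))
  (hty : forall (y : 'rV[R]_(n * p)) (t : R) (a : 'I_(n * p)),
     derivable (fun s : R =>
        partial (fun z => ffun_ n p fi z s + gfun_ n p e gii gij z s) y a) t 1)
  (yk : 'rV[R]_(n * p)) (tk : R)
  (hD : posdef (hess (ffun_ n p fi ^~ tk) yk + blkdiag n p (hess (gfun_ n p e gii gij ^~ tk) yk)))
  (Dmh : 'M[R]_(n * p))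
  (hDmh : inv_sqrt (hess (ffun_ n p fi ^~ tk) yk + blkdiag n p (hess (gfun_ n p e gii gij ^~ tk) yk)) Dmh)
  (K : nat) :
  let F := fun y t => ffun_ n p fi y t + gfun_ n p e gii gij y t in
  let Dk := hess (ffun_ n p fi ^~ tk) yk + blkdiag n p (hess (gfun_ n p e gii gij ^~ tk) yk) in
  let Bk := blkdiag n p (hess (gfun_ n p e gii gij ^~ tk) yk) - hess (gfun_ n p e gii gij ^~ tk) yk in
  let gF := grad_ty F yk tk in
  let Hinv := Dmh *m (\sum_(tau < K.+1) (Dmh *m Bk *m Dmh) ^+ tau) *m Dmh in
  let pK := - (Hinv *m gF) in
  forall i : 'I_n, prec n p e Dk Bk gF K i = subcol n p pK i.
Proof.
move=> F Dk Bk gF Hinv pK i.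
have Dk_unit : Dk \in unitmx by exact: posdef_unit.
have Dmh_sqrt : Dmh *m Dmh = invmx Dk by case: hDmh.
have Dk_blkdiag i1 j1 : i1 != j1 -> blk n p Dk i1 j1 = 0.
  move=> i1_j1; rewrite blkD blk_blkdiag (negbTE i1_j1) addr0.
  exact: blk_hess_ffun_offdiag.
have Bk_sparse i1 j1 : ~~ e i1 j1 -> blk n p Bk i1 j1 = 0.
  move=> nij; rewrite blkB blk_blkdiag.
  have [->|i1_j1] := eqVneq i1 j1; first by rewrite subrr.
  by rewrite blk_hess_gfun_nonadj ?subrr // e_sym.
rewrite /pK /Hinv (@neumann_dir_sqrt _ _ _ Dk _ _ _ Dmh_sqrt).
exact: prec_neumann_dir.
Qed.
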